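(* Let $\overline T$ be a subspace of $\overline K^\circ$ and $\tilde q:\widetilde V\to\overline K/\overline T$ a non-trivial generalized $(\sigma,\varepsilon)$-quadratic form with sesquilinearization $\tilde f$, whose singular points span $\mathrm{PG}(\widetilde V)$. Let $U\subseteq\mathrm{Rad}(\tilde f)$ be a subspace with $U\cap\mathrm{Rad}(\tilde q)=\{0\}$, let $q:=\tilde q_U:V:=\widetilde V/U\to\overline K/\overline R$ (with $\overline R:=\overline T_U$) be the quotient form, assumed non-trivial, and let $\overline S$ be any complement of $\overline T$ in the $K$-vector space $\overline R$. Then $\tilde q$ is isomorphic to the cover $q_E^{\overline S,\overline T}$ (for any basis $E$ of $V$ of $q$-singular vectors), i.e. there is a bijective linear map $\alpha:\widetilde V\to V\oplus\overline S$ with $q_E^{\overline S,\overline T}(\alpha(v))=\tilde q(v)$ for all $v\in\widetilde V$.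
   Context: $K$ division ring, $(\sigma,\varepsilon)$ admissible pair ($\sigma$ anti-automorphism, $\varepsilon^\sigma\varepsilon=1$, $t^{\sigma^2}=\varepsilon t\varepsilon^{-1}$). $K_{\sigma,\varepsilon}=\{t-t^\sigma\varepsilon\}$, $K^{\sigma,\varepsilon}=\{t:t=-t^\sigma\varepsilon\}$, $\overline K=K/K_{\sigma,\varepsilon}$, $\bar t$ class of $t$, $\bar t\circ\lambda=\overline{\lambda^\sigma t\lambda}$, $\overline K^\circ=K^{\sigma,\varepsilon}/K_{\sigma,\varepsilon}$ (right $K$-vector space under $\circ$). A generalized $(\sigma,\varepsilon)$-quadratic form with co-defect a $\circ$-stable subgroup $\overline H$: $p:W\to\overline K/\overline H$ ($W$ right $K$-vector space) with $p(w\lambda)=p(w)\circ\lambda$ ($(\bar t+\overline H)\circ\lambda=\bar t\circ\lambda+\overline H$) and trace-valued $(\sigma,\varepsilon)$-sesquilinear $h$ ($h(x\lambda,y\mu)=\lambda^\sigma h(x,y)\mu$, $h(y,x)=h(x,y)^\sigma\varepsilon$, $h(x,x)\in\{t+t^\sigma\varepsilon\}$) with $p(x+y)=p(x)+p(y)+(\overline{h(x,y)}+\overline H)$. Non-trivial: not identically $\overline H$; singular vector: $p(w)=\overline H$. $\mathrm{Rad}(h)=\{x:h(x,W)=0\}$, $\mathrm{Rad}(p)$ its singular vectors. Quotient: $\overline H_U\supseteq\overline H$ is the subspace of $\overline K^\circ$ with $\overline H_U/\overline H=p(U)$ and $p_U(w+U)=\bar t+\overline H_U$ where $\bar t+\overline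 H=p(w)$. Cover: for $q:V\to\overline K/\overline R$ with sesquilinearization $f$, a basis $E=(e_i)_{i\in I}$ of $q$-singular vectors ($I$ totally ordered), $g_E(\sum e_i\lambda_i,\sum e_j\mu_j)=\sum_{i<j}\lambda_i^\sigma f(e_i,e_j)\mu_j$, and $\overline R=\overline S\oplus\overline T$, the form $q_E^{\overline S,\overline T}:V\oplus\overline S\to\overline K/\overline T$ is $q_E^{\overline S,\overline T}(x+\bar r)=\overline{g_E(x,x)}+\bar r+\overline T$. *)

From HB Require Import structures.
From mathcomp Require Import all_boot all_order all_algebra.
Set Implicit Arguments. Unset Strict Implicit. Unset Printing Implicit Defensive.
Import Order.TTheory GRing.Theory.
Local Open Scope ring_scope.

Definition division_ring (K : unitRingType) : Prop :=
  forall x : K, x != 0 -> x \is a GRing.unit.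

(* Right K-vector spaces are modelled as left modules over the converse ring
   K^c : [rsc v l] is the right scalar multiple  v * l. *)
Definition rsc (K : pzRingType) (V : lmodType K^c) (v : V) (l : K) : V :=
  (l : K^c) *: v.

Definition rlinear (K : pzRingType) (V W : lmodType K^c) (g : V -> W) : Prop :=
  (forall x y, g (x + y) = g x + g y) /\ (forall x l, g (rsc x l) = rsc (g x) l).

Definition admissible (K : unitRingType) (sigma : K -> K) (eps : K) : Prop :=
  [/\ bijective sigma,
      (forall x y, sigma (x + y) = sigma x + sigma y),
      (forall x y, sigma (x * y) = sigma y * sigma x),
      sigma 1 = 1 &
      sigma eps * eps = 1] /\
  (forall t, sigma (sigma t) = eps * t * eps^-1).

(* Subsets of K are Prop predicates; a subgroup \bar H of \bar K = K/K_{s,e}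
   is represented by its preimage H in K (a subgroup containing K_{s,e}). *)
Definition Kse (K : unitRingType) (sigma : K -> K) (eps : K) (x : K) : Prop :=
  exists t, x = t - sigma t * eps.

Definition Kfix (K : unitRingType) (sigma : K -> K) (eps : K) (x : K) : Prop :=
  x = - (sigma x * eps).

Definition circ (K : unitRingType) (sigma : K -> K) (t l : K) : K :=
  sigma l * t * l.

(* H (preimage in K of) a K-subspace \bar H of \bar K^circ = K^{s,e}/K_{s,e}. *)
Definition Kcirc_subspace (K : unitRingType) (sigma : K -> K) (eps : K)
    (H : K -> Prop) : Prop :=
  [/\ (forall x, Kse sigma eps x -> H x),
      (forall x, H x -> Kfix sigma eps x),
      (forall x y, H x -> H y -> H (x - y)) &
      (forall t l, H t -> H (circ sigma t l))].

(* Generalized (sigma,eps)-quadratic form with co-defect \bar H, where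
   p : W -> K is a representative-valued version of p : W -> \bar K/\bar H
   (values are only relevant modulo H), with sesquilinearization h. *)
Definition trace_valued_sesq (K : unitRingType) (sigma : K -> K) (eps : K)
    (W : lmodType K^c) (h : W -> W -> K) : Prop :=
  [/\ (forall x y z, h (x + y) z = h x z + h y z),
      (forall x y z, h x (y + z) = h x y + h x z),
      (forall x y l m, h (rsc x l) (rsc y m) = sigma l * h x y * m),
      (forall x y, h y x = sigma (h x y) * eps) &
      (forall x, exists t, h x x = t + sigma t * eps)].

Definition is_gqf (K : unitRingType) (sigma : K -> K) (eps : K)
    (H : K -> Prop) (W : lmodType K^c) (p : W -> K) (h : W -> W -> K) : Prop :=
  [/\ trace_valued_sesq sigma eps h,
      (forall w l, H (p (rsc w l) - circ sigma (p w) l)) &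
      (forall x y, H (p (x + y) - (p x + p y + h x y)))].

Definition singular (K : unitRingType) (H : K -> Prop) (W : lmodType K^c)
    (p : W -> K) (w : W) : Prop := H (p w).

Definition nontrivial (K : unitRingType) (H : K -> Prop) (W : lmodType K^c)
    (p : W -> K) : Prop := exists w, ~ H (p w).

Definition radf (K : unitRingType) (W : lmodType K^c) (h : W -> W -> K)
    (x : W) : Prop := forall y, h x y = 0.

Definition radq (K : unitRingType) (H : K -> Prop) (W : lmodType K^c)
    (p : W -> K) (h : W -> W -> K) (x : W) : Prop := radf h x /\ singular H p x.

Definition singular_span (K : unitRingType) (H : K -> Prop) (W : lmodType K^c)
    (p : W -> K) : Prop :=
  forall v : W, exists s : seq (W * K),
    (forall c, c \in s -> singular H p c.1) /\
    v = \sum_(c <- s) rsc c.1 c.2.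

(* \bar T_U : the subspace with \bar T_U / \bar T = p(U) (preimage in K). *)
Definition quot_codefect (K : unitRingType) (T : K -> Prop) (W : lmodType K^c)
    (p : W -> K) (U : W -> Prop) (x : K) : Prop :=
  exists u t, U u /\ T t /\ x = p u + t.

Definition is_basis (K : unitRingType) (V : lmodType K^c) (I : eqType)
    (e : I -> V) : Prop :=
  (forall v, exists (s : seq I) (lam : I -> K), v = \sum_(i <- s) rsc (e i) (lam i)) /\
  (forall (s : seq I) (lam : I -> K), uniq s ->
     \sum_(i <- s) rsc (e i) (lam i) = 0 -> forall i, i \in s -> lam i = 0).

(* [gE_val sigma e f x y] : y = g_E(x, x), where
   g_E(sum e_i l_i, sum e_j m_j) = sum_{i<j} l_i^sigma f(e_i,e_j) m_j. *)
Definition gE_val (K : unitRingType) (sigma : K -> K) (V : lmodType K^c)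
    (d : Order.disp_t) (I : orderType d) (e : I -> V) (f : V -> V -> K)
    (x : V) (y : K) : Prop :=
  exists (s : seq I) (lam : I -> K),
    [/\ uniq s,
        x = \sum_(i <- s) rsc (e i) (lam i) &
        y = \sum_(i <- s) \sum_(j <- s | (i < j)%O)
              sigma (lam i) * f (e i) (e j) * lam j].

(* Isomorphism W -> V (+) \bar S onto the cover q_E^{S,T}, with
   alpha = (a1, a2), a2 taking values in (the preimage S of) \bar S and being
   K-linear modulo K_{s,e} for the circ-structure. *)
Definition cover_iso (K : unitRingType) (sigma : K -> K) (eps : K)
    (S T : K -> Prop) (W V : lmodType K^c) (qt : W -> K)
    (d : Order.disp_t) (I : orderType d) (e : I -> V) (f : V -> V -> K)
    (a1 : W -> V) (a2 : W -> K) : Prop :=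
  [/\ rlinear a1,
      (forall v, S (a2 v)),
      (forall v w, Kse sigma eps (a2 (v + w) - (a2 v + a2 w))) &
      (forall v l, Kse sigma eps (a2 (rsc v l) - circ sigma (a2 v) l))] /\
  [/\
      (forall v, a1 v = 0 -> Kse sigma eps (a2 v) -> v = 0),
      (forall x s, S s -> exists v, a1 v = x /\ Kse sigma eps (a2 v - s)) &
      (* q_E^{S,T}(alpha v) = qt v *)
      (forall v y, gE_val sigma e f (a1 v) y -> T (y + a2 v - qt v))].

(* \bar S is a complement of \bar T in \bar R (all given by preimages in K,
   each containing K_{s,e}). *)
Definition complement_in (K : unitRingType) (sigma : K -> K) (eps : K)
    (S T R : K -> Prop) : Prop :=
  [/\ (forall x, S x -> R x),
      (forall r, R r -> exists s t, S s /\ T t /\ r = s + t) &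
      (forall x, S x -> T x -> Kse sigma eps x)].

From HB Require Import structures.
From mathcomp Require Import all_boot all_order all_algebra.
From Stdlib Require Import ClassicalEpsilon.
Set Implicit Arguments. Unset Strict Implicit. Unset Printing Implicit Defensive.
Import Order.TTheory GRing.Theory.
Local Open Scope ring_scope.

(* Pick q_t-singular lifts of the singular basis E of V (possible because the
   defect of any lift lies in R = T + q_t(U)) and extend them to a linear
   section L of the quotient map pi.  Every v then splits as
   L(pi v) + u with u in U ⊆ Rad(f_t).  On L(V) the form q_t is computed by
   g_E, since the basis vectors are singular; on U it is additive modulo T
   with values in R = S ⊕ T, and taking its S-component yields the second
   coordinate of the isomorphism v |-> (pi v, S-part of q_t(v - L(pi v))).
   Injectivity is exactly U ∩ Rad(q_t) = 0. *)

Section CongruenceModulo.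
Variables (G : zmodType) (P : G -> Prop).

Definition subgroup_pred := P 0 /\ (forall x y, P x -> P y -> P (x - y)).

Definition eq_mod (a b : G) := P (a - b).

Hypothesis hP : subgroup_pred.

Lemma subgroup_predN x : P x -> P (- x).
Proof. by move=> Px; rewrite -sub0r; apply: hP.2 => //; apply: hP.1. Qed.

Lemma subgroup_predD x y : P x -> P y -> P (x + y).
Proof.
by move=> Px Py; rewrite -[y]opprK; apply: hP.2 => //; apply: subgroup_predN.
Qed.

Lemma subgroup_pred_sum (I : eqType) (r : seq I) (F : I -> G) :
  (forall i, i \in r -> P (F i)) -> P (\sum_(i <- r) F i).
Proof.
move=> PF; rewrite big_seq; apply: (big_ind P hP.1 subgroup_predD) => i.
exact: PF.
Qed.

Lemma eq_mod0 a : eq_mod a 0 <-> P a.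
Proof. by rewrite /eq_mod subr0. Qed.

Lemma eq_mod_refl a : eq_mod a a.
Proof. by rewrite /eq_mod subrr; apply: hP.1. Qed.

Lemma eq_mod_sym a b : eq_mod a b -> eq_mod b a.
Proof. by move=> hab; rewrite /eq_mod -opprB; apply: subgroup_predN. Qed.

Lemma eq_mod_trans b a c : eq_mod a b -> eq_mod b c -> eq_mod a c.
Proof. by move=> hab hbc; rewrite /eq_mod -(subrKA b); apply: subgroup_predD. Qed.

Lemma eq_modD a b c d : eq_mod a b -> eq_mod c d -> eq_mod (a + c) (b + d).
Proof. by move=> hab hcd; rewrite /eq_mod opprD addrACA; apply: subgroup_predD. Qed.

Lemma eq_mod_sum (I : eqType) (r : seq I) (F F' : I -> G) :
  (forall i, i \in r -> eq_mod (F i) (F' i)) ->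
  eq_mod (\sum_(i <- r) F i) (\sum_(i <- r) F' i).
Proof. by move=> hF; rewrite /eq_mod -sumrB; apply: subgroup_pred_sum. Qed.

End CongruenceModulo.

Arguments eq_mod0 {G P a}.

Section AdmissiblePair.
Variables (K : unitRingType) (sigma : K -> K) (eps : K).
Hypothesis hadm : admissible sigma eps.

Lemma sigmaD x y : sigma (x + y) = sigma x + sigma y.
Proof. by case: hadm => -[]. Qed.

Lemma sigma0 : sigma 0 = 0.
Proof. by apply: (addrI (sigma 0)); rewrite -sigmaD !addr0. Qed.

Lemma sigmaN x : sigma (- x) = - sigma x.
Proof. by apply/eqP; rewrite -addr_eq0 -sigmaD addNr sigma0. Qed.

Lemma sigmaB x y : sigma (x - y) = sigma x - sigma y.
Proof. by rewrite sigmaD sigmaN. Qed.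

Lemma Kse_subgroup : subgroup_pred (Kse sigma eps).
Proof.
split; first by exists 0; rewrite sigma0 mul0r subr0.
move=> _ _ [t ->] [t' ->]; exists (t - t').
by rewrite sigmaB mulrBl opprD addrACA -opprD.
Qed.

Lemma Kcirc_subgroup (H : K -> Prop) :
  Kcirc_subspace sigma eps H -> subgroup_pred H.
Proof. by case=> HKse _ HB _; split=> //; apply: HKse; case: Kse_subgroup. Qed.

Lemma Kse_sigma_eps_sub b : Kse sigma eps (sigma b * eps - b).
Proof. by exists (- b); rewrite sigmaN mulNr opprK addrC. Qed.

Lemma admissible_eps_unit : division_ring K -> eps \is a GRing.unit.
Proof.
move=> hK; apply: hK; apply: (contraTneq _ (oner_neq0 K)) => eps0.
have [[_ _ _ _ sE] _] := hadm; by rewrite -sE eps0 mulr0 eqxx.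
Qed.

(* This is where [sigma (sigma t) = eps * t * eps^-1] enters. *)
Lemma sigma_sandwich : eps \is a GRing.unit ->
  forall a x y, sigma x * (sigma a * eps) * y = sigma (sigma y * a * x) * eps.
Proof.
case: hadm => -[_ _ sM _ _] ss epsU a x y.
by rewrite !sM ss !mulrA divrK.
Qed.

End AdmissiblePair.

Section RightLinearMaps.
Variables (K : pzRingType) (V W : lmodType K^c) (g : V -> W).
Hypothesis hg : rlinear g.

Lemma rlinear0 : g 0 = 0.
Proof. by apply: (addrI (g 0)); rewrite -hg.1 !addr0. Qed.

Lemma rlinearB x y : g (x - y) = g x - g y.
Proof.
have gN z : g (- z) = - g z by apply/eqP; rewrite -addr_eq0 -hg.1 addNr rlinear0.
by rewrite hg.1 gN.
Qed.

Lemma rlinear_sum (I : Type) (r : seq I) (x : I -> V) (lam : I -> K) :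
  g (\sum_(i <- r) rsc (x i) (lam i)) = \sum_(i <- r) rsc (g (x i)) (lam i).
Proof.
rewrite (big_morph g hg.1 rlinear0); apply: eq_bigr => i _; exact: hg.2.
Qed.

End RightLinearMaps.

(* Indices may repeat in [r], so that sums and scalings of combinations are
   again combinations. *)
Definition lin_comb (K : pzRingType) (I : Type) (M : lmodType K^c) (g : I -> M)
  (r : seq (I * K)) : M := \sum_(c <- r) rsc (g c.1) c.2.

Section LinearCombinations.
Variables (K : pzRingType) (I : eqType) (M : lmodType K^c) (g : I -> M).

Lemma lin_comb1 i : lin_comb g [:: (i, 1)] = g i.
Proof. by rewrite /lin_comb big_seq1 /rsc scale1r. Qed.

Lemma lin_comb_cat r1 r2 : lin_comb g (r1 ++ r2) = lin_comb g r1 + lin_comb g r2.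
Proof. exact: big_cat. Qed.

Lemma lin_comb_scale r l :
  lin_comb g [seq (c.1, c.2 * l) | c <- r] = rsc (lin_comb g r) l.
Proof.
rewrite /lin_comb big_map /rsc scaler_sumr; apply: eq_bigr => c _.
by rewrite scalerA.
Qed.

Lemma lin_comb_opp r : lin_comb g [seq (c.1, - c.2) | c <- r] = - lin_comb g r.
Proof.
rewrite /lin_comb big_map -sumrN; apply: eq_bigr => c _; exact: scaleNr.
Qed.

Lemma lin_comb_undup r : lin_comb g r =
  \sum_(i <- undup (map fst r)) rsc (g i) (\sum_(c <- r | c.1 == i) c.2).
Proof.
rewrite /lin_comb /rsc.
under [RHS]eq_bigr => i _ do rewrite scaler_suml.
transitivity (\sum_(i <- undup (map fst r)) \sum_(c <- r | c.1 == i)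
                ((c.2 : K^c) *: g c.1)).
  2: by apply: eq_bigr => i _; apply: eq_bigr => c /eqP ->.
under [RHS]eq_bigr => i _ do rewrite big_mkcond.
rewrite exchange_big /= [LHS]big_seq [RHS]big_seq; apply: eq_bigr => c cr.
rewrite -big_mkcond -big_filter /=.
have -> : [seq i <- undup (map fst r) | c.1 == i] = [:: c.1].
  rewrite -(filter_pred1_uniq (undup_uniq (map fst r))) ?mem_undup ?map_f //.
  by apply: eq_filter => i; rewrite /= eq_sym.
by rewrite big_seq1.
Qed.

End LinearCombinations.

Section Bases.
Variables (K : unitRingType) (V : lmodType K^c) (I : eqType) (e : I -> V).
Hypothesis he : is_basis e.

Lemma basis_lin_comb v : exists r, v = lin_comb e r.
Proof.
have [s [lam ->]] := he.1 v; exists [seq (i, lam i) | i <- s].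
by rewrite /lin_comb big_map.
Qed.

Lemma basis_lin_comb0 (M : lmodType K^c) (g : I -> M) r :
  lin_comb e r = 0 -> lin_comb g r = 0.
Proof.
rewrite !lin_comb_undup => /(he.2 _ _ (undup_uniq _)) lam0.
by rewrite big_seq big1 // => i /lam0 ->; rewrite /rsc scale0r.
Qed.

Lemma basis_lin_comb_eq (M : lmodType K^c) (g : I -> M) r1 r2 :
  lin_comb e r1 = lin_comb e r2 -> lin_comb g r1 = lin_comb g r2.
Proof.
move=> /eqP; rewrite -subr_eq0 -lin_comb_opp -lin_comb_cat => /eqP.
move=> /(basis_lin_comb0 g) /eqP.
by rewrite lin_comb_cat lin_comb_opp subr_eq0 => /eqP.
Qed.

Lemma basis_rlinear_extension (M : lmodType K^c) (g : I -> M) :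
  exists L : V -> M, rlinear L /\ forall r, L (lin_comb e r) = lin_comb g r.
Proof.
pose rep v := epsilon (inhabits [::]) (fun r => v = lin_comb e r).
have repP v : v = lin_comb e (rep v).
  exact: epsilon_spec (basis_lin_comb v).
pose L v := lin_comb g (rep v).
have LE r : L (lin_comb e r) = lin_comb g r.
  by apply: basis_lin_comb_eq; rewrite -repP.
exists L; split=> //; split=> [x y | x l].
- by rewrite {1}(repP x) {1}(repP y) -lin_comb_cat LE lin_comb_cat.
- by rewrite {1}(repP x) -lin_comb_scale LE lin_comb_scale.
Qed.

End Bases.

Section SesquilinearForms.
Variables (K : unitRingType) (sigma : K -> K) (eps : K).
Hypothesis hadm : admissible sigma eps.
Variables (W : lmodType K^c) (h : W -> W -> K).
Hypothesis hh : trace_valued_sesq sigma eps h.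

Lemma radf_orth u w : radf h u -> h w u = 0.
Proof. by case: hh => _ _ _ hsym _ hu; rewrite hsym hu (sigma0 hadm) mul0r. Qed.

Lemma sesq_swap x y l m :
  eps \is a GRing.unit ->
  Kse sigma eps (sigma l * h x y * m - sigma m * h y x * l).
Proof.
case: hh => _ _ _ hsym _ epsU.
by rewrite hsym (sigma_sandwich hadm epsU); apply: Kse_sigma_eps_sub.
Qed.

End SesquilinearForms.

Section GeneralizedQuadraticForms.
Variables (K : unitRingType) (sigma : K -> K) (eps : K).
Hypothesis hadm : admissible sigma eps.
Variables (H : K -> Prop) (W : lmodType K^c) (p : W -> K) (h : W -> W -> K).
Hypotheses (hH : Kcirc_subspace sigma eps H) (hp : is_gqf sigma eps H p h).

Let hHgrp : subgroup_pred H := Kcirc_subgroup hadm hH.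

Lemma gqf0 : H (p 0).
Proof.
have [_ hsc _] := hp; have := hsc 0 0.
by rewrite /rsc scaler0 /circ mulr0 subr0.
Qed.

Lemma gqfDr_rad u w : radf h u -> eq_mod H (p (w + u)) (p w + p u).
Proof.
have [hh _ hadd] := hp => hu.
by have := hadd w u; rewrite (radf_orth hadm hh) // addr0.
Qed.

Lemma gqfBr_rad u w : radf h u -> eq_mod H (p (w - u)) (p w - p u).
Proof.
move=> /(gqfDr_rad (w - u)); rewrite subrK /eq_mod => hw.
by rewrite opprB addrA -opprB; apply: subgroup_predN.
Qed.

Lemma gqf_sum_singular (d : Order.disp_t) (I : orderType d) (x : I -> W)
    (lam : I -> K) (s : seq I) :
  eps \is a GRing.unit -> (forall i, H (p (x i))) -> uniq s ->
  eq_mod H (p (\sum_(i <- s) rsc (x i) (lam i)))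
    (\sum_(i <- s) \sum_(j <- s | (i < j)%O) sigma (lam i) * h (x i) (x j) * lam j).
Proof.
move=> epsU xsing; have [hh pZ pD] := hp; have [_ hD2 hsc _ _] := hh.
set F := fun i j => sigma (lam i) * h (x i) (x j) * lam j.
under [X in eq_mod _ _ X]eq_bigr => i _ do rewrite big_mkcond /=.
elim: s => [|a s IH]; first by rewrite !big_nil => _; apply/eq_mod0/gqf0.
rewrite cons_uniq => /andP[a_notin_s /IH {}IH].
have -> : \sum_(i <- a :: s) \sum_(j <- a :: s) (if (i < j)%O then F i j else 0) =
    0 + \sum_(i <- s) \sum_(j <- s) (if (i < j)%O then F i j else 0) +
    \sum_(j <- s) ((if (a < j)%O then F a j else 0) + if (j < a)%O then F j a else 0).
  rewrite big_cons big_cons ltxx add0r.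
  under [X in _ + X = _]eq_bigr => i _ do rewrite big_cons.
  by rewrite !big_split /= add0r [LHS]addrA [RHS]addrC.
rewrite big_cons; apply: (eq_mod_trans hHgrp (pD _ _)).
apply: eq_modD => //; first apply: eq_modD => //.
- rewrite eq_mod0 -(subrK (circ sigma (p (x a)) (lam a)) (p _)).
  by apply: subgroup_predD => //; case: hH => _ _ _; apply.
- have hx0 : h (rsc (x a) (lam a)) 0 = 0.
    by apply: (addrI (h (rsc (x a) (lam a)) 0)); rewrite -hD2 !addr0.
  rewrite (big_morph _ (hD2 _) hx0); apply: eq_mod_sum => // j js.
  rewrite hsc -/(F a j); have ja : j != a by apply: contraNneq a_notin_s => <-.
  (* For [j < a] the cross term is the [(j, a)] term up to [K_{sigma,eps}]. *)
  case: (ltgtP a j) => [aj | ja' | ej]; last by rewrite ej eqxx in ja.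
  + by rewrite addr0; apply: eq_mod_refl.
  + by rewrite add0r; case: hH => hKse _ _ _; apply: hKse; apply: (sesq_swap hadm).
Qed.

End GeneralizedQuadraticForms.

Section QuotientCover.
Variables (K : unitRingType) (sigma : K -> K) (eps : K).
Hypotheses (hadm : admissible sigma eps) (epsU : eps \is a GRing.unit).
Variables (T S : K -> Prop).
Hypotheses (hT : Kcirc_subspace sigma eps T) (hS : Kcirc_subspace sigma eps S).
Variables (Wt V : lmodType K^c) (qt : Wt -> K) (ft : Wt -> Wt -> K).
Hypothesis hqt : is_gqf sigma eps T qt ft.
Variables (U : Wt -> Prop) (pi : Wt -> V).
Hypotheses (hU_rad : forall u, U u -> radf ft u) (hpi_lin : rlinear pi)
  (hpi_ker : forall w, pi w = 0 <-> U w).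

Local Notation R := (quot_codefect T qt U).

Let hTgrp : subgroup_pred T := Kcirc_subgroup hadm hT.
Let hSgrp : subgroup_pred S := Kcirc_subgroup hadm hS.

Lemma kernelB u u' : U u -> U u' -> U (u - u').
Proof.
by move=> /hpi_ker hu /hpi_ker hu'; apply/hpi_ker; rewrite rlinearB // hu hu' subr0.
Qed.

Lemma quot_codefect_qt u : U u -> R (qt u).
Proof. by move=> hu; exists u, 0; split=> //; split; [case: hTgrp | rewrite addr0]. Qed.

Lemma quot_codefect_subgroup : subgroup_pred R.
Proof.
split.
  exists 0, (- qt 0); split; first exact/hpi_ker/rlinear0.
  by rewrite subrr; split=> //; apply: subgroup_predN; last exact: gqf0 hqt.
move=> _ _ [u1 [t1 [hu1 [ht1 ->]]]] [u2 [t2 [hu2 [ht2 ->]]]].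
exists (u1 - u2), (qt u1 - qt u2 - qt (u1 - u2) + (t1 - t2)).
split; first exact: kernelB.
split; last by rewrite [RHS]addrA [qt (u1 - u2) + _]addrC subrK opprD addrACA.
apply: (subgroup_predD hTgrp); last by case: hTgrp => _; apply.
apply: (eq_mod_sym hTgrp); apply: (gqfBr_rad hadm hT hqt); exact: hU_rad.
Qed.

Lemma singular_lift (q : V -> K) (w0 : Wt) :
  (forall w, R (q (pi w) - qt w)) -> R (q (pi w0)) ->
  exists w, pi w = pi w0 /\ T (qt w).
Proof.
move=> hq_def hsing.
have [u [t [hu [ht qt_w0]]]] : R (qt w0).
  have := quot_codefect_subgroup.2 _ _ hsing (hq_def w0).
  by rewrite opprB addrC subrK.
exists (w0 - u); split; first by rewrite rlinearB // (proj2 (hpi_ker u) hu) subr0.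
rewrite -eq_mod0; apply: (eq_mod_trans hTgrp (gqfBr_rad hadm hT hqt _ (hU_rad hu))).
by rewrite qt_w0 addrC addKr; apply/eq_mod0.
Qed.

Variables (L : V -> Wt) (sp : K -> K).
Hypotheses (hL_lin : rlinear L) (hpiL : forall x, pi (L x) = x)
  (hSc : complement_in sigma eps S T R)
  (hsp : forall r, R r -> S (sp r) /\ T (r - sp r)).

Definition kernel_part (v : Wt) := v - L (pi v).

Definition cover_component (v : Wt) := sp (qt (kernel_part v)).

Lemma kernel_partU v : U (kernel_part v).
Proof. by apply/hpi_ker; rewrite rlinearB // hpiL subrr. Qed.

Lemma kernel_part_decomp v : v = L (pi v) + kernel_part v.
Proof. by rewrite addrC subrK. Qed.

Lemma kernel_part_rlinear : rlinear kernel_part.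
Proof.
split=> [v w | v l]; rewrite /kernel_part.
- by rewrite hpi_lin.1 hL_lin.1 opprD addrACA.
- by rewrite hpi_lin.2 hL_lin.2 /rsc scalerBr.
Qed.

Lemma complement_part_unique r s s' :
  S s -> T (r - s) -> S s' -> T (r - s') -> Kse sigma eps (s - s').
Proof.
have [_ _ hST] := hSc => hs hrs hs' hrs'.
apply: hST; first by case: hSgrp => _; apply.
have -> : s - s' = (r - s') - (r - s) by rewrite opprB [RHS]addrC addrA subrK.
by case: hTgrp => _; apply.
Qed.

Lemma cover_componentS v : S (cover_component v).
Proof. exact: (hsp (quot_codefect_qt (kernel_partU v))).1. Qed.

Lemma cover_componentT v : eq_mod T (qt (kernel_part v)) (cover_component v).
Proof. exact: (hsp (quot_codefect_qt (kernel_partU v))).2. Qed.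

Lemma cover_componentD v w :
  Kse sigma eps (cover_component (v + w) - (cover_component v + cover_component w)).
Proof.
apply: (complement_part_unique (r := qt (kernel_part (v + w)))).
- exact: cover_componentS.
- exact: cover_componentT.
- by apply: (subgroup_predD hSgrp); apply: cover_componentS.
rewrite kernel_part_rlinear.1.
apply: (eq_mod_trans hTgrp (gqfDr_rad hadm hqt _ (hU_rad (kernel_partU w)))).
by apply: eq_modD => //; apply: cover_componentT.
Qed.

Lemma cover_componentZ v l :
  Kse sigma eps (cover_component (rsc v l) - circ sigma (cover_component v) l).
Proof.
have [_ _ _ Tcirc] := hT; have [_ _ _ Scirc] := hS; have [_ qtZ _] := hqt.
apply: (complement_part_unique (r := qt (kernel_part (rsc v l)))).
- exact: cover_componentS.
- exact: cover_componentT.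
- by apply: Scirc; apply: cover_componentS.
rewrite kernel_part_rlinear.2; apply: (eq_mod_trans hTgrp (qtZ _ _)).
by rewrite /eq_mod /circ -mulrBl -mulrBr; apply: Tcirc; apply: cover_componentT.
Qed.

Lemma cover_injective v :
  (forall u, U u -> radq T qt ft u -> u = 0) ->
  pi v = 0 -> Kse sigma eps (cover_component v) -> v = 0.
Proof.
move=> hU_cap pv0 hv; have hUv : U v by apply/hpi_ker.
have kv : kernel_part v = v by rewrite /kernel_part pv0 (rlinear0 hL_lin) subr0.
apply: hU_cap => //; split; first exact: hU_rad.
have := cover_componentT v; rewrite kv /singular /eq_mod => hqtv.
rewrite -(subrK (cover_component v) (qt v)); apply: (subgroup_predD hTgrp) => //.
by case: hT => TKse _ _ _; apply: TKse.
Qed.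

Lemma cover_surjective x s :
  S s -> exists v, pi v = x /\ Kse sigma eps (cover_component v - s).
Proof.
move=> hs; have [SR _ _] := hSc; have [u [t [hu [ht def]]]] := SR s hs.
have pv : pi (L x + u) = x by rewrite hpi_lin.1 hpiL (proj2 (hpi_ker u) hu) addr0.
have kv : kernel_part (L x + u) = u by rewrite /kernel_part pv addrAC subrr add0r.
exists (L x + u); split=> //.
apply: (complement_part_unique (r := qt u)); [exact: cover_componentS | | exact: hs | ].
- by have := cover_componentT (L x + u); rewrite kv.
- by rewrite def opprD addrA subrr add0r; apply: subgroup_predN.
Qed.

Lemma cover_form (d : Order.disp_t) (I : orderType d) (e : I -> V)
    (f : V -> V -> K) v y :
  (forall i, T (qt (L (e i)))) -> (forall x x', f (pi x) (pi x') = ft x x') ->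
  gE_val sigma e f (pi v) y -> T (y + cover_component v - qt v).
Proof.
move=> hLe hf [s [lam [us hpv ->]]]; apply: (eq_mod_sym hTgrp).
rewrite {1}(kernel_part_decomp v) hpv (rlinear_sum hL_lin).
apply: (eq_mod_trans hTgrp (gqfDr_rad hadm hqt _ (hU_rad (kernel_partU v)))).
apply: eq_modD => //; last exact: cover_componentT.
under [X in eq_mod _ _ X]eq_bigr => i _ do
  under eq_bigr => j _ do rewrite -{1}[e i]hpiL -[e j]hpiL hf.
exact: (gqf_sum_singular hadm hT hqt (x := fun i => L (e i)) lam epsU hLe us).
Qed.

Lemma cover_iso_cover_component (d : Order.disp_t) (I : orderType d)
    (e : I -> V) (f : V -> V -> K) :
  (forall u, U u -> radq T qt ft u -> u = 0) ->
  (forall i, T (qt (L (e i)))) -> (forall x x', f (pi x) (pi x') = ft x x') ->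
  cover_iso sigma eps S T qt e f pi cover_component.
Proof.
move=> hU_cap hLe hf; split; split.
- exact: hpi_lin.
- exact: cover_componentS.
- exact: cover_componentD.
- exact: cover_componentZ.
- by move=> v; apply: cover_injective.
- exact: cover_surjective.
- by move=> v y; apply: cover_form.
Qed.

End QuotientCover.

Lemma complement_projection (K : unitRingType) (sigma : K -> K) (eps : K)
    (S T R : K -> Prop) :
  complement_in sigma eps S T R ->
  exists sp : K -> K, forall r, R r -> S (sp r) /\ T (r - sp r).
Proof.
case=> _ hdec _; exists (fun r => epsilon (inhabits 0) (fun s => S s /\ T (r - s))).
move=> r /hdec [s [t [hs [ht ->]]]].
apply: (epsilon_spec (inhabits 0) (fun s' => S s' /\ T (s + t - s'))).
by exists s; rewrite addrAC subrr add0r.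
Qed.

Theorem mainTheorem18
  (K : unitRingType) (hK : division_ring K)
  (sigma : K -> K) (eps : K) (hadm : admissible sigma eps)
  (T : K -> Prop) (hT : Kcirc_subspace sigma eps T)
  (Wt : lmodType K^c) (qt : Wt -> K) (ft : Wt -> Wt -> K)
  (hqt : is_gqf sigma eps T qt ft)
  (hqt_nt : nontrivial T qt)
  (hspan : singular_span T qt)
  (U : Wt -> Prop)
  (hU_rad : forall u, U u -> radf ft u)
  (hU_cap : forall u, U u -> radq T qt ft u -> u = 0)
  (V : lmodType K^c) (pi : Wt -> V)
  (hpi_lin : rlinear pi)
  (hpi_surj : forall v, exists w, pi w = v)
  (hpi_ker : forall w, pi w = 0 <-> U w)
  (q : V -> K)
  (hq_def : forall w, quot_codefect T qt U (q (pi w) - qt w))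
  (f : V -> V -> K)
  (hf_def : forall x y, f (pi x) (pi y) = ft x y)
  (hq_nt : nontrivial (quot_codefect T qt U) q)
  (S : K -> Prop) (hS : Kcirc_subspace sigma eps S)
  (hSc : complement_in sigma eps S T (quot_codefect T qt U))
  (d : Order.disp_t) (I : orderType d) (e : I -> V)
  (he_basis : is_basis e)
  (he_sing : forall i, singular (quot_codefect T qt U) q (e i)) :
  exists (a1 : Wt -> V) (a2 : Wt -> K),
    cover_iso sigma eps S T qt e f a1 a2.
Proof.
have epsU := admissible_eps_unit hadm hK.
have lift i : exists w, pi w = e i /\ T (qt w).
  have [w0 hw0] := hpi_surj (e i); rewrite -hw0.
  apply: (singular_lift hadm hT hqt hU_rad hpi_lin hpi_ker) => //.
  by rewrite hw0; apply: he_sing.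
pose et i := epsilon (inhabits 0) (fun w => pi w = e i /\ T (qt w)).
have etP i : pi (et i) = e i /\ T (qt (et i)) := epsilon_spec _ _ (lift i).
have [L [hL_lin hL_comb]] := basis_rlinear_extension he_basis et.
have hLe i : L (e i) = et i by rewrite -(lin_comb1 e) hL_comb lin_comb1.
have hpiL x : pi (L x) = x.
  have [r ->] := basis_lin_comb he_basis x.
  rewrite hL_comb /lin_comb (rlinear_sum hpi_lin); apply: eq_bigr => c _.
  by rewrite (etP _).1.
have [sp hsp] := complement_projection hSc.
exists pi, (cover_component qt pi L sp).
apply: (cover_iso_cover_component hadm epsU hT hS hqt hU_rad) => // i.
by rewrite hLe; apply: (etP i).2.
Qed.
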